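(* Consider the discrete Motsch–Tadmor model (as in the context) with initial data satisfying $\|\Delta^x(0)\|_F<M$ and $\|\Delta^v(0)\|_F<\kappa\int_{\|\Delta^x(0)\|_F}^M\psi(s)\,ds$, and let $C\in(0,1)$. Then for all sufficiently small $h>0$, the solution $(X(n),V(n))_{n\ge0}$ with time-step $h$ has the property that for every $i\in\{1,\dots,N\}$ the limit $v_i^\infty:=\lim_{n\to\infty}v_i(n)$ exists, $\|v_i^\infty\|<\infty$, and for all $n\ge0$ \[ \|v_i^\infty-v_i(n)\|\le\frac{h\kappa\sqrt{N}\,\|\Delta^v(0)\|_F\,e^{-C\kappa\psi(M)hn}}{1-e^{-C\kappa\psi(M)h}} . \]
   Context: Discrete MT model: fix $N\ge1$, $d\ge1$, $\kappa>0$, $h>0$, and $a:[0,\infty)\to\mathbb{R}$ with constants $0<c_1\le c_2$, $c_1\le a\le c_2$, $|a(r_1)-a(r_2)|\le L_a|r_1-r_2|$ ($L_a>0$); $0<h<\min\{1,1/\kappa\}$. A solution satisfies $x_i(n+1)=x_i(n)+hv_i(n)$, $v_i(n+1)=v_i(n)+h\kappa\sum_j\phi_{ij}(n)(v_j(n)-v_i(n))$, $\phi_{ij}(n)=\frac{a(\|x_i(n)-x_j(n)\|)}{\sum_ka(\|x_i(n)-x_k(n)\|)}$, $x_i(n),v_i(n)\in\mathbb{R}^d$. Notation: $\|\Delta^x(n)\|_F=(\sum_{i,j}\|x_i(n)-x_j(n)\|^2)^{1/2}$, $\|\Delta^v(n)\|_F=(\sum_{i,j}\|v_i(n)-v_j(n)\|^2)^{1/2}$;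 $\|\phi\|_{\mathrm{Lip}}=\frac{L_a}{Nc_1}(1+\frac{c_2}{c_1})$, $M=\frac{1}{4N\|\phi\|_{\mathrm{Lip}}}$, $\psi(s)=1-\|\phi\|_{\mathrm{Lip}}Ns$. *)

From HB Require Import structures.
From mathcomp Require Import all_boot all_order all_algebra.
From mathcomp Require Import all_classical all_reals all_analysis.
Set Implicit Arguments. Unset Strict Implicit. Unset Printing Implicit Defensive.
Import Order.TTheory GRing.Theory Num.Theory.
Import numFieldNormedType.Exports.
Local Open Scope classical_set_scope.
Local Open Scope ring_scope.

Section MT.
Variables (R : realType) (N d : nat).

Definition enorm (x : 'rV[R]_d) : R := Num.sqrt (\sum_(k < d) x ord0 k ^+ 2).

(* Frobenius norm of the difference matrix: (sum_{i,j} ||y_i - y_j||^2)^(1/2) *)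
Definition DeltaF (Y : 'I_N -> 'rV[R]_d) : R :=
  Num.sqrt (\sum_(i < N) \sum_(j < N) enorm (Y i - Y j) ^+ 2).

Definition mt_phi (a : R -> R) (X : 'I_N -> 'rV[R]_d) (i j : 'I_N) : R :=
  a (enorm (X i - X j)) / \sum_(k < N) a (enorm (X i - X k)).

Definition is_MT_solution (a : R -> R) (kappa h : R)
  (x v : nat -> 'I_N -> 'rV[R]_d) : Prop :=
  forall n i,
    x n.+1 i = x n i + h *: v n i /\
    v n.+1 i = v n i + (h * kappa) *:
                 \sum_(j < N) mt_phi a (x n) i j *: (v n j - v n i).

Definition phiLip (c1 c2 La : R) : R := La / (N%:R * c1) * (1 + c2 / c1).
Definition Mconst (c1 c2 La : R) : R := 1 / (4 * N%:R * phiLip c1 c2 La).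
Definition psi (c1 c2 La : R) (s : R) : R := 1 - phiLip c1 c2 La * N%:R * s.

End MT.

(* Write t := h kappa and beta := La / (N c1).  The MT weights are row-stochastic
   and Lipschitz in the positions, so ||phi(X) - 1/N||_F <= beta ||Delta^x||_F,
   and one step contracts the velocity diameter:
     ||Delta^v(n+1)||_F <= (1 - t (1 - beta ||Delta^x(n)||_F)) ||Delta^v(n)||_F,
   while ||Delta^x(n+1)||_F <= ||Delta^x(n)||_F + h ||Delta^v(n)||_F.
   Since psi(M) = 3/4 and int psi <= M - ||Delta^x(0)||_F, the hypotheses give
   beta (||Delta^x(0)||_F + ||Delta^v(0)||_F / (kappa psi(M))) <= 1 - psi(M).  By
   induction the positions then never leave the region where the contraction
   factor is at most q := 1 - t psi(M), so ||Delta^v(n)||_F <= q^n ||Delta^v(0)||_F.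
   Each v_i moves by at most t ||Delta^v(n)||_F per step, hence converges with tail
   t ||Delta^v(0)||_F q^n / (1 - q); finally q <= exp(-C t psi(M)).  This works for
   every h with h kappa <= 1, so h0 = 1 will do. *)

From HB Require Import structures.
From mathcomp Require Import all_boot all_order all_algebra.
From mathcomp Require Import all_classical all_reals all_analysis.
From mathcomp Require Import ring lra.
Set Implicit Arguments. Unset Strict Implicit. Unset Printing Implicit Defensive.
Import Order.TTheory GRing.Theory Num.Theory.
Import numFieldNormedType.Exports.
Local Open Scope classical_set_scope.
Local Open Scope ring_scope.

Section SumsOfSquares.
Variables (R : realFieldType) (T : finType).
Implicit Types f g : T -> R.

Lemma sumr_sqr_ge0 f : 0 <= \sum_t f t ^+ 2.
Proof. by apply: sumr_ge0 => t _; exact: sqr_ge0. Qed.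

Lemma sqr_sum_mul_le f g :
  (\sum_t f t * g t) ^+ 2 <= (\sum_t f t ^+ 2) * (\sum_t g t ^+ 2).
Proof.
set A := \sum_t f t ^+ 2; set B := \sum_t g t ^+ 2; set C := \sum_t f t * g t.
have B_ge0 : 0 <= B by exact: sumr_sqr_ge0.
have [B0 | B_neq0] := eqVneq B 0.
  have g0 t : g t = 0.
    apply/eqP; rewrite -sqrf_eq0; apply/eqP/(psumr_eq0P _ B0) => // s _.
    exact: sqr_ge0.
  by rewrite /C big1 ?expr0n ?mulr_ge0 ?sumr_sqr_ge0 // => t _; rewrite g0 mulr0.
have B_gt0 : 0 < B by rewrite lt_def B_neq0 B_ge0.
have expand : \sum_t (B * f t - C * g t) ^+ 2 = B * (A * B - C ^+ 2).
  rewrite (eq_bigr (fun t => B ^+ 2 * f t ^+ 2 - 2 * B * C * (f t * g t)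
                             + C ^+ 2 * g t ^+ 2)); last by move=> t _; ring.
  by rewrite !big_split /= sumrN -!mulr_sumr -/A -/B -/C; ring.
have := sumr_sqr_ge0 (fun t => B * f t - C * g t).
by rewrite expand pmulr_rge0 // subr_ge0.
Qed.

Lemma sqr_sum_le_card f : (\sum_t f t) ^+ 2 <= #|T|%:R * \sum_t f t ^+ 2.
Proof.
have := sqr_sum_mul_le (fun _ => 1) f.
under eq_bigr do rewrite mul1r.
by under [X in _ <= X * _]eq_bigr do rewrite expr1n; rewrite sumr_const.
Qed.

Lemma sum_sqr_subr f :
  \sum_i \sum_j (f i - f j) ^+ 2 =
  2 * #|T|%:R * \sum_i f i ^+ 2 - 2 * (\sum_i f i) ^+ 2.
Proof.
have sum_row i : \sum_j (f i - f j) ^+ 2 =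
    #|T|%:R * f i ^+ 2 + \sum_j f j ^+ 2 - 2 * f i * \sum_j f j.
  rewrite (eq_bigr (fun j => f i ^+ 2 + f j ^+ 2 - 2 * f i * f j)); last first.
    by move=> j _; ring.
  by rewrite !big_split /= sumrN sumr_const -mulr_sumr [#|T|%:R * _]mulr_natl.
under eq_bigr do rewrite sum_row.
rewrite !big_split /= sumrN sumr_const -mulr_suml -!mulr_sumr -[_ *+ #|xpredT|]mulr_natr.
by rewrite (_ : #|xpredT| = #|T|) //; ring.
Qed.

End SumsOfSquares.

Section L2Norm.
Variable R : rcfType.

Definition l2norm (T : finType) (f : T -> R) := Num.sqrt (\sum_t f t ^+ 2).

Variable T : finType.
Implicit Types f g : T -> R.

Lemma l2norm_ge0 f : 0 <= l2norm f.
Proof. exact: sqrtr_ge0. Qed.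

Lemma l2norm_sqr f : l2norm f ^+ 2 = \sum_t f t ^+ 2.
Proof. by rewrite sqr_sqrtr // sumr_sqr_ge0. Qed.

Lemma l2norm_le_sqr f c :
  0 <= c -> \sum_t f t ^+ 2 <= c ^+ 2 -> l2norm f <= c.
Proof. by move=> c0 le_fc; rewrite -(ger0_norm c0) -sqrtr_sqr ler_sqrt ?sqr_ge0. Qed.

Lemma sum_mul_le_l2norm f g : \sum_t f t * g t <= l2norm f * l2norm g.
Proof.
rewrite -sqrtrM ?sumr_sqr_ge0 //; apply: le_trans (ler_norm _) _.
by rewrite -sqrtr_sqr ler_sqrt ?mulr_ge0 ?sumr_sqr_ge0 // sqr_sum_mul_le.
Qed.

Lemma l2normD f g : l2norm (fun t => f t + g t) <= l2norm f + l2norm g.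
Proof.
apply: l2norm_le_sqr; first by rewrite addr_ge0 ?l2norm_ge0.
rewrite sqrrD !l2norm_sqr -mulr_natl.
rewrite (eq_bigr (fun t => f t ^+ 2 + 2 * (f t * g t) + g t ^+ 2)); last first.
  by move=> t _; ring.
by rewrite !big_split /= -mulr_sumr lerD2r lerD2l ler_wpM2l ?sum_mul_le_l2norm.
Qed.

Lemma l2normZ c f : l2norm (fun t => c * f t) = `|c| * l2norm f.
Proof.
rewrite /l2norm (eq_bigr (fun t => c ^+ 2 * f t ^+ 2)) => [|t _]; last exact: exprMn.
by rewrite -mulr_sumr sqrtrM ?sqr_ge0 // sqrtr_sqr.
Qed.

End L2Norm.

Lemma l2norm_mul_le (R : rcfType) (T S : finType) (A : T -> S -> R) (u : S -> R) :
  l2norm (fun i => \sum_j A i j * u j)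
    <= Num.sqrt (\sum_i \sum_j A i j ^+ 2) * l2norm u.
Proof.
apply: l2norm_le_sqr; first by rewrite mulr_ge0 ?sqrtr_ge0 ?l2norm_ge0.
rewrite exprMn sqr_sqrtr ?l2norm_sqr; last by apply: sumr_ge0 => i _; exact: sumr_sqr_ge0.
by rewrite mulr_suml; apply: ler_sum => i _; exact: sqr_sum_mul_le.
Qed.

Section ConsensusStep.
Variables (R : rcfType) (T : finType) (phi : T -> T -> R) (t E : R).
Hypotheses (T_gt0 : (0 < #|T|)%N) (phi_row1 : forall i, \sum_j phi i j = 1).
Hypotheses (t_ge0 : 0 <= t) (t_le1 : t <= 1) (E_ge0 : 0 <= E).
Hypothesis phi_dev : \sum_i \sum_j (phi i j - #|T|%:R^-1) ^+ 2 <= E ^+ 2.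

Lemma contraction_rate_ge0 : 0 <= 1 - t * (1 - E).
Proof. by rewrite subr_ge0 (le_trans _ t_le1) // -[leRHS]mulr1 ler_wpM2l // gerBl. Qed.

Lemma l2norm_mul_centered_le (u : T -> R) : \sum_i u i = 0 ->
  l2norm (fun i => \sum_k phi i k * u k) <= E * l2norm u.
Proof.
move=> sum_u0.
have -> : (fun i => \sum_k phi i k * u k) = fun i => \sum_k (phi i k - #|T|%:R^-1) * u k.
  apply: funext => i; under [RHS]eq_bigr do rewrite mulrBl.
  by rewrite sumrB -mulr_sumr sum_u0 mulr0 subr0.
apply: le_trans (l2norm_mul_le _ _) _; apply: ler_wpM2r; first exact: l2norm_ge0.
by rewrite -(ger0_norm E_ge0) -sqrtr_sqr ler_sqrt ?sqr_ge0.
Qed.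

(* Centered at its mean [wb], the step acts on [u := w - wb], which sums to zero,
   as [u |-> (1 - t) u + t (phi u)]. *)
Lemma consensus_step_contraction (w : T -> R) :
  \sum_i \sum_j ((w i + t * \sum_k phi i k * (w k - w i))
                 - (w j + t * \sum_k phi j k * (w k - w j))) ^+ 2
    <= (1 - t * (1 - E)) ^+ 2 * \sum_i \sum_j (w i - w j) ^+ 2.
Proof.
set n : R := #|T|%:R.
have n_neq0 : n != 0 by rewrite pnatr_eq0 -lt0n.
set wb := n^-1 * \sum_i w i.
pose u i := w i - wb.
pose e i := \sum_k phi i k * u k.
pose g i := (1 - t) * u i + t * e i.
have sum_u0 : \sum_i u i = 0.
  rewrite sumrB sumr_const -mulr_natl (_ : #|xpredT| = #|T|) // -/n /wb.
  by rewrite mulrA mulfV // mul1r subrr.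
have step_g i : w i + t * \sum_k phi i k * (w k - w i) = g i + wb.
  have -> : \sum_k phi i k * (w k - w i) = e i - u i.
    rewrite /e -[u i]mul1r -(phi_row1 i) mulr_suml -sumrB.
    by apply: eq_bigr => k _; rewrite /u; ring.
  by rewrite /g /u; ring.
have pairs_w : \sum_i \sum_j (w i - w j) ^+ 2 = 2 * n * \sum_i u i ^+ 2.
  transitivity (\sum_i \sum_j (u i - u j) ^+ 2).
    by apply: eq_bigr => i _; apply: eq_bigr => j _; rewrite /u; congr (_ ^+ 2); ring.
  by rewrite sum_sqr_subr sum_u0 expr0n mulr0 subr0.
have pairs_g : \sum_i \sum_j ((w i + t * \sum_k phi i k * (w k - w i))
                 - (w j + t * \sum_k phi j k * (w k - w j))) ^+ 2
               <= 2 * n * \sum_i g i ^+ 2.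
  under eq_bigr do under eq_bigr do rewrite !step_g opprD addrACA subrr addr0.
  by rewrite sum_sqr_subr lerBlDr lerDl mulr_ge0 ?sqr_ge0.
have e_le : l2norm e <= E * l2norm u := l2norm_mul_centered_le sum_u0.
have g_le : l2norm g <= (1 - t * (1 - E)) * l2norm u.
  apply: le_trans (l2normD _ _) _; rewrite !l2normZ !ger0_norm ?subr_ge0 //.
  have -> : (1 - t * (1 - E)) * l2norm u = (1 - t) * l2norm u + t * (E * l2norm u).
    by ring.
  by rewrite lerD2l ler_wpM2l.
apply: le_trans pairs_g _; rewrite pairs_w mulrCA ler_wpM2l ?mulr_ge0 //.
rewrite -!l2norm_sqr -exprMn lerXn2r ?nnegrE ?l2norm_ge0 ?mulr_ge0 ?l2norm_ge0 //.
exact: contraction_rate_ge0.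
Qed.

End ConsensusStep.

Section EuclideanNorm.
Variables (R : realType) (d : nat).
Implicit Types y z : 'rV[R]_d.

Lemma enorm_ge0 y : 0 <= enorm y.
Proof. exact: l2norm_ge0. Qed.

Lemma enorm_sqr y : enorm y ^+ 2 = \sum_k y ord0 k ^+ 2.
Proof. exact: l2norm_sqr. Qed.

Lemma enorm0 : enorm (0 : 'rV[R]_d) = 0.
Proof. by rewrite /enorm big1 ?sqrtr0 // => k _; rewrite mxE expr0n. Qed.

Lemma enormD y z : enorm (y + z) <= enorm y + enorm z.
Proof.
rewrite /enorm; under eq_bigr do rewrite mxE.
exact: (l2normD (y ord0) (z ord0)).
Qed.

Lemma enormZ c y : enorm (c *: y) = `|c| * enorm y.
Proof.
rewrite /enorm; under eq_bigr do rewrite mxE.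
exact: (l2normZ c (y ord0)).
Qed.

Lemma enormN y : enorm (- y) = enorm y.
Proof. by rewrite -scaleN1r enormZ normrN1 mul1r. Qed.

Lemma enorm_distC y z : enorm (y - z) = enorm (z - y).
Proof. by rewrite -enormN opprB. Qed.

Lemma ler_enorm_dist y z : `|enorm y - enorm z| <= enorm (y - z).
Proof.
have tri (u w : 'rV[R]_d) : enorm u - enorm w <= enorm (u - w).
  by rewrite lerBlDr; have := enormD (u - w) w; rewrite subrK.
by rewrite ler_norml tri andbT lerNl opprB enorm_distC tri.
Qed.

Lemma mx_norm_le_enorm y : `|y| <= enorm y.
Proof.
rewrite [leLHS]/Num.Def.normr /= mx_normrE.
apply: bigmax_le => [|[i k] _]; first exact: enorm_ge0.
rewrite (ord1 i) -(@ler_pXn2r _ 2) ?nnegrE ?enorm_ge0 // enorm_sqr real_normK ?num_real //.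
by rewrite (bigD1 k) //= lerDl sumr_ge0 // => l _; exact: sqr_ge0.
Qed.

Lemma enorm_continuous : continuous (@enorm R d).
Proof.
have -> : @enorm R d = Num.sqrt \o (fun y : 'rV[R]_d => \sum_k y ord0 k ^+ 2) by [].
move=> y; apply: continuous_comp; last exact: sqrt_continuous.
apply: continuous_big => [|k _]; first exact: add_continuous.
move=> z; exact: (continuous_comp (@coord_continuous _ 1 d ord0 k z) (@exprn_continuous R 2 _)).
Qed.

End EuclideanNorm.

Section Diameter.
Variables (R : realType) (N d : nat).
Implicit Types X Y V : 'I_N -> 'rV[R]_d.

Lemma DeltaF_ge0 Y : 0 <= DeltaF Y.
Proof. exact: sqrtr_ge0. Qed.

Lemma DeltaF_sqr Y : DeltaF Y ^+ 2 = \sum_i \sum_j enorm (Y i - Y j) ^+ 2.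
Proof. by rewrite sqr_sqrtr // sumr_ge0 // => i _; apply: sumr_ge0 => j _; exact: sqr_ge0. Qed.

Lemma sum_enorm_row_le_DeltaF Y i : \sum_j enorm (Y i - Y j) ^+ 2 <= DeltaF Y ^+ 2.
Proof.
rewrite DeltaF_sqr [leRHS](bigD1 i) //= lerDl.
by apply: sumr_ge0 => l _; apply: sumr_ge0 => j _; exact: sqr_ge0.
Qed.

Lemma DeltaF_sqr_coord Y :
  DeltaF Y ^+ 2 = \sum_k \sum_i \sum_j (Y i ord0 k - Y j ord0 k) ^+ 2.
Proof.
rewrite DeltaF_sqr [RHS]exchange_big; apply: eq_bigr => i _.
rewrite [RHS]exchange_big; apply: eq_bigr => j _.
by rewrite enorm_sqr; apply: eq_bigr => k _; rewrite !mxE.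
Qed.

Lemma DeltaF_l2norm Y :
  DeltaF Y = l2norm (fun p : 'I_N * 'I_N * 'I_d => Y p.1.1 ord0 p.2 - Y p.1.2 ord0 p.2).
Proof.
have -> : DeltaF Y = Num.sqrt (DeltaF Y ^+ 2) by rewrite sqrtr_sqr ger0_norm ?DeltaF_ge0.
rewrite DeltaF_sqr_coord /l2norm exchange_big.
by under eq_bigr do rewrite exchange_big; rewrite pair_bigA pair_bigA.
Qed.

Lemma DeltaF_addZ_le X V c :
  DeltaF (fun i => X i + c *: V i) <= DeltaF X + `|c| * DeltaF V.
Proof.
rewrite !DeltaF_l2norm -l2normZ; apply: le_trans (l2normD _ _).
rewrite le_eqVlt; apply/orP; left; apply/eqP; congr l2norm.
by apply: funext => p; rewrite !mxE; ring.
Qed.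

End Diameter.

Section GeometricIncrements.
Variables (R : realType) (d : nat) (u : nat -> 'rV[R]_d) (K q : R).
Hypotheses (q_ge0 : 0 <= q) (q_lt1 : q < 1).
Hypothesis du : forall m, enorm (u m.+1 - u m) <= K * q ^+ m.

Lemma geometric_sum_le n : \sum_(l < n) q ^+ l <= (1 - q)^-1.
Proof.
rewrite -[leRHS]mul1r ler_pdivlMr ?subr_gt0 //.
by rewrite -opprB mulrN mulrC -subrX1 opprB gerBl exprn_ge0.
Qed.

Lemma enorm_shift_le m p : enorm (u (m + p) - u m) <= K * q ^+ m / (1 - q).
Proof.
have K_ge0 : 0 <= K.
  by have := le_trans (enorm_ge0 _) (du 0); rewrite expr0 mulr1.
apply: (@le_trans _ _ (K * q ^+ m * \sum_(l < p) q ^+ l)); last first.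
  by rewrite ler_wpM2l ?mulr_ge0 ?exprn_ge0 ?geometric_sum_le.
elim: p => [|p IHp]; first by rewrite addn0 subrr big_ord0 mulr0 enorm0.
rewrite addnS big_ord_recr /= mulrDr -[K * _ * q ^+ p]mulrA -exprD.
rewrite -(subrK (u (m + p)%N) (u (m + p).+1)) -addrA.
by apply: le_trans (enormD _ _) _; rewrite [leRHS]addrC lerD ?du.
Qed.

Lemma geometric_increments_cvg : cvgn u.
Proof.
apply/cauchy_cvgP/cauchy_exP => e e_gt0.
have geo0 : geometric (K / (1 - q)) q @ \oo --> 0.
  by apply: cvg_geometric; rewrite ger0_norm.
have [m0 _ small] := cvgr0_norm_lt _ geo0 _ e_gt0.
exists (u m0); exists m0 => // n /= le_m0n.
rewrite -ball_normE /=; apply: le_lt_trans (mx_norm_le_enorm _) _.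
rewrite enorm_distC -(subnKC le_m0n); apply: le_lt_trans (enorm_shift_le _ _) _.
by rewrite mulrAC; apply: le_lt_trans (ler_norm _) (small m0 (leqnn m0)).
Qed.

Lemma enorm_lim_sub_le m : enorm (limn u - u m) <= K * q ^+ m / (1 - q).
Proof.
have cvg_sub : u n - u m @[n --> \oo] --> limn u - u m.
  by apply: cvgB; [exact: geometric_increments_cvg | exact: cvg_cst].
apply: (cvgr_to_le (continuous_cvg _ (@enorm_continuous R d _) cvg_sub)).
by exists m => // n /= le_mn; rewrite -(subnKC le_mn) enorm_shift_le.
Qed.

End GeometricIncrements.

Section MTWeights.
Variables (R : realType) (N d : nat) (a : R -> R) (c1 La : R).
Hypotheses (N_gt0 : (0 < N)%N) (c1_gt0 : 0 < c1) (La_ge0 : 0 <= La).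
Hypothesis a_ge : forall r, 0 <= r -> c1 <= a r.
Hypothesis a_lip :
  forall r1 r2, 0 <= r1 -> 0 <= r2 -> `|a r1 - a r2| <= La * `|r1 - r2|.
Variable X : 'I_N -> 'rV[R]_d.

Lemma mt_weight_gt0 i j : 0 < a (enorm (X i - X j)).
Proof. exact: lt_le_trans c1_gt0 (a_ge (enorm_ge0 _)). Qed.

Lemma mt_weights_sum_ge i : N%:R * c1 <= \sum_k a (enorm (X i - X k)).
Proof.
have -> : N%:R * c1 = \sum_(k < N) c1 by rewrite sumr_const card_ord mulr_natl.
by apply: ler_sum => k _; exact: a_ge (enorm_ge0 _).
Qed.

Lemma mt_weights_sum_gt0 i : 0 < \sum_k a (enorm (X i - X k)).
Proof. by apply: lt_le_trans (mt_weights_sum_ge i); rewrite mulr_gt0 ?ltr0n. Qed.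

Lemma mt_phi_ge0 i j : 0 <= mt_phi a X i j.
Proof.
by rewrite divr_ge0 ?ltW ?mt_weight_gt0 ?mt_weights_sum_gt0.
Qed.

Lemma mt_phi_le1 i j : mt_phi a X i j <= 1.
Proof.
rewrite ler_pdivrMr ?mt_weights_sum_gt0 // mul1r (bigD1 j) //= lerDl.
by apply: sumr_ge0 => k _; exact/ltW/mt_weight_gt0.
Qed.

Lemma mt_phi_row1 i : \sum_j mt_phi a X i j = 1.
Proof. by rewrite -mulr_suml mulfV // gt_eqF ?mt_weights_sum_gt0. Qed.

Lemma mt_phi_sub_inv_le i j :
  `|mt_phi a X i j - N%:R^-1|
    <= La / (N%:R ^+ 2 * c1) * \sum_k enorm (X j - X k).
Proof.
set S := \sum_k a (enorm (X i - X k)).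
have S_gt0 : 0 < S := mt_weights_sum_gt0 i.
have N_neq0 : N%:R != 0 :> R by rewrite pnatr_eq0 -lt0n.
have -> : mt_phi a X i j - N%:R^-1 =
    (\sum_k (a (enorm (X i - X j)) - a (enorm (X i - X k)))) / (N%:R * S).
  rewrite sumrB sumr_const card_ord -/S /mt_phi -/S -mulr_natr.
  by field; rewrite N_neq0 gt_eqF.
have num_le : `|\sum_k (a (enorm (X i - X j)) - a (enorm (X i - X k)))|
              <= La * \sum_k enorm (X j - X k).
  apply: le_trans (ler_norm_sum _ _ _) _; rewrite mulr_sumr; apply: ler_sum => k _.
  apply: le_trans (a_lip (enorm_ge0 _) (enorm_ge0 _)) _; apply: ler_wpM2l => //.
  by apply: le_trans (ler_enorm_dist _ _) _; rewrite opprB addrC addrA subrK enorm_distC.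
rewrite normrM normfV (ger0_norm (ltW (mulr_gt0 _ S_gt0))) ?ltr0n //.
rewrite ler_pdivrMr ?mulr_gt0 ?ltr0n //; apply: le_trans num_le _.
set T := \sum_k enorm (X j - X k).
have T_ge0 : 0 <= T by apply: sumr_ge0 => k _; exact: enorm_ge0.
have -> : La / (N%:R ^+ 2 * c1) * T * (N%:R * S) = La * T * (S / (N%:R * c1)).
  by field; rewrite N_neq0 gt_eqF.
rewrite -[leLHS]mulr1 ler_wpM2l ?mulr_ge0 // ler_pdivlMr ?mulr_gt0 ?ltr0n // mul1r.
exact: mt_weights_sum_ge.
Qed.

Lemma mt_phi_dev_le :
  \sum_i \sum_j (mt_phi a X i j - N%:R^-1) ^+ 2 <= (La / (N%:R * c1) * DeltaF X) ^+ 2.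
Proof.
set b := La / (N%:R ^+ 2 * c1).
have b_ge0 : 0 <= b by rewrite divr_ge0 // mulr_ge0 ?exprn_ge0 // ltW.
have entry_le i j : (mt_phi a X i j - N%:R^-1) ^+ 2
    <= b ^+ 2 * (N%:R * \sum_k enorm (X j - X k) ^+ 2).
  apply: le_trans (_ : (b * \sum_k enorm (X j - X k)) ^+ 2 <= _).
    rewrite -real_normK ?num_real // lerXn2r ?nnegrE ?mt_phi_sub_inv_le //.
    by rewrite mulr_ge0 // sumr_ge0 // => k _; exact: enorm_ge0.
  by rewrite exprMn ler_wpM2l ?sqr_ge0 // -[N in N%:R]card_ord sqr_sum_le_card.
apply: le_trans (ler_sum _ (fun i _ => ler_sum _ (fun j _ => entry_le i j))) _.
rewrite sumr_const card_ord -mulr_sumr -mulr_sumr -DeltaF_sqr exprMn -mulr_natl /b.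
rewrite le_eqVlt; apply/orP; left; apply/eqP; field.
by rewrite gt_eqF // pnatr_eq0 -lt0n.
Qed.

Lemma enorm_alignment_le (V : 'I_N -> 'rV[R]_d) i :
  enorm (\sum_j mt_phi a X i j *: (V j - V i)) <= DeltaF V.
Proof.
have -> : enorm (\sum_j mt_phi a X i j *: (V j - V i))
    = l2norm (fun k => \sum_j (V j ord0 k - V i ord0 k) * mt_phi a X i j).
  rewrite /enorm /l2norm; congr Num.sqrt; apply: eq_bigr => k _; congr (_ ^+ 2).
  by rewrite summxE; apply: eq_bigr => j _; rewrite !mxE mulrC.
apply: le_trans (l2norm_mul_le _ _) _; rewrite -[leRHS]mulr1.
apply: ler_pM; rewrite ?sqrtr_ge0 ?l2norm_ge0 //.
  rewrite -(ger0_norm (DeltaF_ge0 V)) -sqrtr_sqr ler_sqrt ?sqr_ge0 //.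
  apply: le_trans (sum_enorm_row_le_DeltaF V i); rewrite exchange_big.
  apply: ler_sum => j _; rewrite enorm_sqr le_eqVlt; apply/orP; left; apply/eqP.
  by apply: eq_bigr => k _; rewrite !mxE -sqrrN opprB.
apply: l2norm_le_sqr => //; rewrite expr1n -(mt_phi_row1 i); apply: ler_sum => j _.
by rewrite expr2 -[leRHS]mulr1 ler_wpM2l ?mt_phi_ge0 ?mt_phi_le1.
Qed.

Lemma DeltaF_alignment_step (V : 'I_N -> 'rV[R]_d) t : 0 <= t -> t <= 1 ->
  DeltaF (fun i => V i + t *: \sum_j mt_phi a X i j *: (V j - V i))
    <= (1 - t * (1 - La / (N%:R * c1) * DeltaF X)) * DeltaF V.
Proof.
move=> t_ge0 t_le1.
have E_ge0 : 0 <= La / (N%:R * c1) * DeltaF X.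
  by rewrite mulr_ge0 ?DeltaF_ge0 // divr_ge0 // mulr_ge0 // ltW.
have rate_ge0 := contraction_rate_ge0 t_ge0 t_le1 E_ge0.
rewrite -(@ler_pXn2r _ 2) ?nnegrE ?mulr_ge0 ?DeltaF_ge0 //.
rewrite exprMn !DeltaF_sqr_coord mulr_sumr; apply: ler_sum => k _.
have := consensus_step_contraction _ mt_phi_row1 t_ge0 t_le1 E_ge0 _ (fun i => V i ord0 k).
rewrite card_ord => /(_ N_gt0 mt_phi_dev_le); apply: le_trans.
rewrite le_eqVlt; apply/orP; left; apply/eqP.
apply: eq_bigr => i _; apply: eq_bigr => j _; rewrite !mxE !summxE.
by congr ((_ + _ * _ - (_ + _ * _)) ^+ 2); apply: eq_bigr => l _; rewrite !mxE.
Qed.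

End MTWeights.

Section MTSolution.
Variables (R : realType) (N d : nat) (a : R -> R) (c1 La kappa h : R).
Variables x v : nat -> 'I_N -> 'rV[R]_d.
Hypotheses (N_gt0 : (0 < N)%N) (c1_gt0 : 0 < c1) (La_ge0 : 0 <= La).
Hypothesis a_ge : forall r, 0 <= r -> c1 <= a r.
Hypothesis a_lip :
  forall r1 r2, 0 <= r1 -> 0 <= r2 -> `|a r1 - a r2| <= La * `|r1 - r2|.
Hypotheses (h_gt0 : 0 < h) (kappa_gt0 : 0 < kappa) (hkappa_le1 : h * kappa <= 1).
Hypothesis sol : is_MT_solution a kappa h x v.

Local Notation beta := (La / (N%:R * c1)).

Let hkappa_ge0 : 0 <= h * kappa. Proof. by rewrite mulr_ge0 // ltW. Qed.

Lemma DeltaF_position_succ m : DeltaF (x m.+1) <= DeltaF (x m) + h * DeltaF (v m).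
Proof.
have -> : x m.+1 = fun i => x m i + h *: v m i by apply: funext => i; case: (sol m i).
by rewrite -[h in h * _]ger0_norm ?DeltaF_addZ_le // ltW.
Qed.

Lemma DeltaF_velocity_succ m :
  DeltaF (v m.+1) <= (1 - h * kappa * (1 - beta * DeltaF (x m))) * DeltaF (v m).
Proof.
have -> : v m.+1 = fun i =>
    v m i + (h * kappa) *: \sum_j mt_phi a (x m) i j *: (v m j - v m i).
  by apply: funext => i; case: (sol m i); rewrite mulrC.
exact: DeltaF_alignment_step.
Qed.

Lemma enorm_velocity_succ m i : enorm (v m.+1 i - v m i) <= h * kappa * DeltaF (v m).
Proof.
have [_ ->] := sol m i; rewrite addrC addKr enormZ ger0_norm //.
by rewrite ler_wpM2l // (enorm_alignment_le N_gt0 c1_gt0).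
Qed.

Variable rho : R.
Hypothesis rho_gt0 : 0 < rho.
Hypothesis flock : beta * (DeltaF (x 0) + DeltaF (v 0) / (kappa * rho)) <= 1 - rho.

Let beta_ge0 : 0 <= beta.
Proof. by rewrite divr_ge0 // mulr_ge0 // ltW. Qed.

Lemma velocity_rate_ge0 : 0 <= 1 - h * kappa * rho.
Proof.
have rho_le1 : rho <= 1.
  rewrite -subr_ge0; apply: le_trans flock; rewrite mulr_ge0 // addr_ge0 ?DeltaF_ge0 //.
  by rewrite divr_ge0 ?DeltaF_ge0 // mulr_ge0 // ltW.
by rewrite subr_ge0 -[leRHS]mulr1 ler_pM // ltW.
Qed.

Lemma velocity_rate_lt1 : 1 - h * kappa * rho < 1.
Proof. by rewrite gtrBl !mulr_gt0. Qed.

Lemma DeltaF_velocity_geometric m :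
  DeltaF (v m) <= DeltaF (v 0) * (1 - h * kappa * rho) ^+ m.
Proof.
set q := 1 - h * kappa * rho.
have q_ge0 : 0 <= q := velocity_rate_ge0.
have q_lt1 : q < 1 := velocity_rate_lt1.
suff [] : DeltaF (v m) <= DeltaF (v 0) * q ^+ m /\
          DeltaF (x m) <= DeltaF (x 0) + h * DeltaF (v 0) * \sum_(l < m) q ^+ l by [].
elim: m => [|m [IHv IHx]]; first by rewrite expr0 mulr1 big_ord0 mulr0 addr0.
have travel : h * DeltaF (v 0) * \sum_(l < m) q ^+ l <= DeltaF (v 0) / (kappa * rho).
  apply: le_trans (_ : h * DeltaF (v 0) * (1 - q)^-1 <= _).
    by rewrite ler_wpM2l ?(geometric_sum_le q_ge0 q_lt1) ?mulr_ge0 ?DeltaF_ge0 // ltW.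
  rewrite /q opprB addrC addrNK le_eqVlt; apply/orP; left; apply/eqP.
  by field; rewrite !gt_eqF.
have bounded : beta * DeltaF (x m) <= 1 - rho.
  by apply: le_trans flock; rewrite ler_wpM2l // (le_trans IHx) // lerD2l.
split.
- apply: le_trans (DeltaF_velocity_succ m) _; rewrite exprS mulrCA.
  apply: ler_pM; rewrite ?DeltaF_ge0 //.
    by apply: contraction_rate_ge0 => //; rewrite mulr_ge0 ?DeltaF_ge0.
  by rewrite lerB // ler_wpM2l // lerBrDl addrC -lerBrDl.
- apply: le_trans (DeltaF_position_succ m) _.
  rewrite big_ord_recr /= mulrDr addrA lerD // -mulrA.
  by apply: ler_wpM2l; [exact: ltW | exact: IHv].
Qed.

Lemma enorm_velocity_succ_geometric m i :
  enorm (v m.+1 i - v m i) <= h * kappa * DeltaF (v 0) * (1 - h * kappa * rho) ^+ m.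
Proof.
rewrite -mulrA; apply: le_trans (enorm_velocity_succ m i) _.
by rewrite ler_wpM2l ?DeltaF_velocity_geometric.
Qed.


Lemma mt_velocity_cvg i : exists vinf : 'rV[R]_d,
  v^~ i @ \oo --> vinf /\
  forall m, enorm (vinf - v m i)
    <= h * kappa * DeltaF (v 0) * (1 - h * kappa * rho) ^+ m / (1 - (1 - h * kappa * rho)).
Proof.
have du m := enorm_velocity_succ_geometric m i.
exists (limn (v^~ i)); split=> [|m].
  exact: geometric_increments_cvg velocity_rate_ge0 velocity_rate_lt1 du.
exact: (enorm_lim_sub_le velocity_rate_ge0 velocity_rate_lt1 du m).
Qed.

End MTSolution.

Lemma Rintegral_itv_le_length (R : realType) (f : R -> R) (A B : R) :
  A <= B -> continuous f -> (forall s, A <= s <= B -> f s <= 1) ->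
  Rintegral lebesgue_measure `[A, B] f <= B - A.
Proof.
move=> le_AB f_cont f_le1.
have mAB : measurable (`[A, B] : set R) by exact: measurable_itv.
have le_f1 : Rintegral lebesgue_measure `[A, B] f
             <= Rintegral lebesgue_measure `[A, B] (cst 1).
  apply: le_Rintegral => //.
  - apply: continuous_compact_integrable; first exact: segment_compact.
    exact: continuous_subspaceT.
  - apply: continuous_compact_integrable; first exact: segment_compact.
  by apply: continuous_subspaceT; exact: cst_continuous.
apply: le_trans le_f1 _; rewrite Rintegral_cst // mul1r.
by have /= -> := @lebesgue_measure_itv R `[A, B]; case: ifP => _ /=; rewrite ?subr_ge0.
Qed.

Lemma geometric_tail_le (R : realFieldType) (K q q' : R) m :
  0 <= K -> 0 <= q -> q <= q' -> q' < 1 ->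
  K * q ^+ m / (1 - q) <= K * q' ^+ m / (1 - q').
Proof.
move=> K_ge0 q_ge0 le_qq' q'_lt1.
have q_lt1 : q < 1 := le_lt_trans le_qq' q'_lt1.
rewrite -!mulrA ler_wpM2l //; apply: ler_pM.
- exact: exprn_ge0.
- by rewrite invr_ge0 subr_ge0 ltW.
- by rewrite lerXn2r ?nnegrE // (le_trans q_ge0).
- by rewrite lef_pV2 ?posrE ?subr_gt0 // lerB.
Qed.

Lemma geometric_exp_tail_le (R : realType) (h kappa rho C D s : R) m :
  0 < h -> 0 < kappa -> 0 < rho -> 0 < C < 1 -> 0 <= 1 - h * kappa * rho ->
  0 <= D -> 1 <= s ->
  h * kappa * D * (1 - h * kappa * rho) ^+ m / (1 - (1 - h * kappa * rho))
    <= h * kappa * s * D * expR (- (C * kappa * rho * h * m%:R))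
       / (1 - expR (- (C * kappa * rho * h))).
Proof.
move=> h_gt0 kappa_gt0 rho_gt0 /andP[C_gt0 C_lt1] q_ge0 D_ge0 s_ge1.
set q' := expR (- (C * kappa * rho * h)).
have q'_lt1 : q' < 1 by rewrite expR_lt1 oppr_lt0 !mulr_gt0.
have le_qq' : 1 - h * kappa * rho <= q'.
  apply: le_trans (_ : expR (- (h * kappa * rho)) <= _); first exact: expR_ge1Dx.
  rewrite ler_expR lerN2 (_ : C * kappa * rho * h = C * (h * kappa * rho)); last by ring.
  by rewrite ler_piMl ?mulr_ge0 ?ltW.
have -> : expR (- (C * kappa * rho * h * m%:R)) = q' ^+ m.
  by rewrite -expRM_natl mulrN mulrC.
have K_ge0 : 0 <= h * kappa * D by rewrite !mulr_ge0 // ltW.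
apply: le_trans (geometric_tail_le m K_ge0 q_ge0 le_qq' q'_lt1) _.
rewrite -!mulrA ler_wpM2l ?(ltW h_gt0) // ler_wpM2l ?(ltW kappa_gt0) // ler_peMl //.
by rewrite mulr_ge0 // divr_ge0 ?exprn_ge0 ?expR_ge0 // subr_ge0 ltW.
Qed.

Lemma phiLip_gt0 (R : realType) (N : nat) (c1 c2 La : R) :
  (0 < N)%N -> 0 < c1 -> c1 <= c2 -> 0 < La -> 0 < phiLip N c1 c2 La.
Proof.
move=> N_gt0 c1_gt0 le_c12 La_gt0.
have c2_gt0 : 0 < c2 := lt_le_trans c1_gt0 le_c12.
by rewrite /phiLip mulr_gt0 ?divr_gt0 ?addr_gt0 ?mulr_gt0 ?invr_gt0 ?ltr0n ?ltr01.
Qed.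

Lemma psi_Mconst (R : realType) (N : nat) (c1 c2 La : R) :
  (0 < N)%N -> 0 < c1 -> c1 <= c2 -> 0 < La ->
  psi N c1 c2 La (Mconst N c1 c2 La) = 3 / 4.
Proof.
move=> N_gt0 c1_gt0 le_c12 La_gt0; rewrite /psi /Mconst; field.
by rewrite gt_eqF ?phiLip_gt0 // pnatr_eq0 -lt0n N_gt0.
Qed.

Lemma mt_initial_condition (R : realType) (N d : nat) (kappa c1 c2 La : R)
    (X0 V0 : 'I_N -> 'rV[R]_d) :
  (0 < N)%N -> 0 < kappa -> 0 < c1 -> c1 <= c2 -> 0 < La ->
  DeltaF X0 < Mconst N c1 c2 La ->
  DeltaF V0 < kappa * Rintegral lebesgue_measure
                        `[DeltaF X0, Mconst N c1 c2 La] (psi N c1 c2 La) ->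
  La / (N%:R * c1) *
    (DeltaF X0 + DeltaF V0 / (kappa * psi N c1 c2 La (Mconst N c1 c2 La)))
    <= 1 - psi N c1 c2 La (Mconst N c1 c2 La).
Proof.
move=> N_gt0 kappa_gt0 c1_gt0 le_c12 La_gt0 hX hV.
set M := Mconst N c1 c2 La; set beta := La / (N%:R * c1); set g := 1 + c2 / c1.
have n_ge1 : 1 <= N%:R :> R by rewrite ler1n.
have g_ge2 : 2 <= g by rewrite /g -[2]/(1 + 1) lerD2l ler_pdivlMr // mul1r.
have beta_gt0 : 0 < beta by rewrite divr_gt0 // mulr_gt0 // ltr0n.
have L_gt0 : 0 < phiLip N c1 c2 La by exact: phiLip_gt0.
rewrite psi_Mconst // -/M.
have Dx_ge0 := DeltaF_ge0 X0.
have int_le : Rintegral lebesgue_measure `[DeltaF X0, M] (psi N c1 c2 La)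
              <= M - DeltaF X0.
  apply: Rintegral_itv_le_length; first exact: ltW.
    move=> s; apply: cvgB; first exact: cvg_cst.
    by apply: cvgMr; exact: cvg_id.
  move=> s /andP[le_Dx_s _]; rewrite /psi gerBl.
  apply: mulr_ge0; last exact: le_trans le_Dx_s.
  by apply: mulr_ge0; [exact: ltW | exact: ler0n].
have betaM : beta * M = (4 * N%:R * g)^-1.
  rewrite /beta /M /Mconst /phiLip -/g; field.
  by rewrite !gt_eqF ?ltr0n // (lt_le_trans _ g_ge2).
have travel : DeltaF V0 / (kappa * (3 / 4)) <= 4 / 3 * (M - DeltaF X0).
  rewrite ler_pdivrMr ?mulr_gt0 //; apply: le_trans (ltW hV) _.
  have -> : 4 / 3 * (M - DeltaF X0) * (kappa * (3 / 4)) = kappa * (M - DeltaF X0).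
    by field.
  by rewrite ler_wpM2l // ltW.
have small : beta * M <= 1 / 8.
  rewrite betaM div1r lef_pV2 ?posrE ?mulr_gt0 ?ltr0n //; last exact: lt_le_trans g_ge2.
  have : 1 * 2 <= N%:R * g by apply: ler_pM.
  lra.
have := ler_wpM2l (ltW beta_gt0) travel.
have : 0 <= beta * DeltaF X0 by rewrite mulr_ge0 // ltW.
rewrite mulrDr; lra.
Qed.

Theorem corollary3p5 (R : realType) (N d : nat) (kappa c1 c2 La C : R)
  (a : R -> R) (X0 V0 : 'I_N -> 'rV[R]_d) :
  (0 < N)%N -> (0 < d)%N -> 0 < kappa ->
  0 < c1 -> c1 <= c2 -> 0 < La ->
  (forall r, 0 <= r -> c1 <= a r <= c2) ->
  (forall r1 r2, 0 <= r1 -> 0 <= r2 -> `|a r1 - a r2| <= La * `|r1 - r2|) ->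
  DeltaF X0 < Mconst N c1 c2 La ->
  DeltaF V0 < kappa * Rintegral lebesgue_measure
                        `[DeltaF X0, Mconst N c1 c2 La]
                        (psi N c1 c2 La) ->
  0 < C < 1 ->
  exists h0 : R, 0 < h0 /\
    forall h : R, 0 < h -> h < h0 -> h < 1 -> h < kappa^-1 ->
    forall x v : nat -> 'I_N -> 'rV[R]_d,
      x 0%N = X0 -> v 0%N = V0 -> is_MT_solution a kappa h x v ->
      forall i : 'I_N, exists vinf : 'rV[R]_d,
        (v^~ i @ \oo --> vinf) /\
        forall n : nat,
          enorm (vinf - v n i) <=
            h * kappa * Num.sqrt N%:R * DeltaF V0
              * expR (- (C * kappa * psi N c1 c2 La (Mconst N c1 c2 La) * h * n%:R))
              / (1 - expR (- (C * kappa * psi N c1 c2 La (Mconst N c1 c2 La) * h))).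
Proof.
move=> N_gt0 _ kappa_gt0 c1_gt0 le_c12 La_gt0 a_bd a_lip hX hV C01.
have flock := mt_initial_condition N_gt0 kappa_gt0 c1_gt0 le_c12 La_gt0 hX hV.
have rhoE := psi_Mconst N_gt0 c1_gt0 le_c12 La_gt0.
set rho := psi N c1 c2 La _ in flock rhoE *.
have rho_gt0 : 0 < rho by rewrite rhoE.
have a_ge r : 0 <= r -> c1 <= a r by move=> /a_bd /andP[].
exists 1; split => // h h_gt0 _ _ h_lt x v x0 v0 sol i.
have hkappa_le1 : h * kappa <= 1 by rewrite -ler_pdivlMr // div1r ltW.
rewrite -x0 -v0 in flock.
have [vinf [cvg_v tail]] := mt_velocity_cvg N_gt0 c1_gt0 (ltW La_gt0) a_ge a_lip
  h_gt0 kappa_gt0 hkappa_le1 sol rho_gt0 flock i.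
exists vinf; split => // m; apply: le_trans (tail m) _; rewrite v0.
apply: geometric_exp_tail_le => //; rewrite ?DeltaF_ge0 ?rhoE //; first by lra.
by rewrite -[leLHS]sqrtr1 ler_sqrt // ler1n.
Qed.
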